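(* Let $E$ be a finite nonempty set. (1) For every CAR mechanism $\pi$ on $E$ and every $\epsilon>0$ there exists a rational CAR mechanism $\pi'$ on $E$ with $\|\pi-\pi'\|<\epsilon$. (2) Every CAR mechanism on $E$ is exactly equal to a finite mixture of extreme CAR mechanisms, each of which is rational (hence generated by a uniform multicover). Equivalently, every CAR mechanism arises from the following procedure for suitable choices of finitely many uniform multicovers $\mathcal C_1,\dots,\mathcal C_p$ of $E$ (of heights $k_1,\dots,k_p$) and a probability vector $(\lambda_1,\dots,\lambda_p)$: given $x\in E$, choose index $j$ with probability $\lambda_j$ independently of $x$, then choose uniformly at random (probability $1/k_j$ each, counting multiplicity) one of the $k_j$ sets of $\mathcal C_j$ containing $x$. *)

From mathcomp Require Import all_boot all_order all_algebra.
From mathcomp Require Import reals.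
Set Implicit Arguments. Unset Strict Implicit. Unset Printing Implicit Defensive.
Import Order.TTheory GRing.Theory Num.Theory.
Local Open Scope ring_scope.

(* A (coarsening) mechanism on a finite set E: pi A x = probability of
   reporting the set A when the true value is x. *)
Definition mechanism (R : realType) (E : finType) := {set E} -> E -> R.

Definition is_CAR (R : realType) (E : finType) (pi : mechanism R E) : Prop :=
  [/\ (forall (A : {set E}) (x : E), 0 <= pi A x),
      (forall (A : {set E}) (x : E), x \notin A -> pi A x = 0),
      (forall x, \sum_(A : {set E} | x \in A) pi A x = 1)
    & (forall (A : {set E}) (x y : E), x \in A -> y \in A -> pi A x = pi A y)].

Definition mech_dist (R : realType) (E : finType) (pi pi' : mechanism R E) : R :=
  \big[Num.max/0]_(A : {set E}) \big[Num.max/0]_(x : E) `|pi A x - pi' A x|.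

Definition is_rat_real (R : realType) (r : R) : Prop := exists q : rat, r = ratr q.

Definition rational_mech (R : realType) (E : finType) (pi : mechanism R E) : Prop :=
  forall (A : {set E}) (x : E), is_rat_real (pi A x).

Definition extreme_CAR (R : realType) (E : finType) (pi : mechanism R E) : Prop :=
  is_CAR pi /\
  forall (pi1 pi2 : mechanism R E) (t : R), is_CAR pi1 -> is_CAR pi2 ->
    0 < t < 1 -> (forall (A : {set E}) (x : E), pi A x = t * pi1 A x + (1 - t) * pi2 A x) ->
    forall (A : {set E}) (x : E), pi1 A x = pi2 A x.

(* A uniform multicover of E of height k: a multiset of nonempty subsets of E
   (given by multiplicities m) such that every x lies in exactly k of them
   (counted with multiplicity). *)
Definition uniform_multicover (E : finType) (m : {set E} -> nat) (k : nat) : Prop :=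
  [/\ (0 < k)%N, m set0 = 0%N & forall x : E, (\sum_(A : {set E} | x \in A) m A)%N = k].

Definition multicover_mech (R : realType) (E : finType) (m : {set E} -> nat) (k : nat)
  : mechanism R E :=
  fun A x => if x \in A then (m A)%:R / k%:R else 0.

(* A CAR mechanism is the same as a weight q A on each set A, with q >= 0,
   q set0 = 0 and sum_(A | x \in A) q A = 1 for every x.  These weights form a
   polytope, whose extreme points are those q admitting no nonzero balanced
   perturbation (all point sums zero) supported in supp q.  An extreme q is
   therefore the unique solution of a 0/1 linear system, hence rational, and
   clearing denominators turns it into a uniform multicover.  A non-extreme q
   can be pushed both ways along a balanced perturbation until some set leaves
   the support, so induction on the support size makes q a finite mixture of
   extreme points; rounding the mixing weights to rationals gives density. *)

From mathcomp Require Import all_boot all_order all_algebra.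
From mathcomp Require Import reals.
From mathcomp Require Import ring.
From Stdlib Require Import Classical.
Set Implicit Arguments. Unset Strict Implicit. Unset Printing Implicit Defensive.
Import Order.TTheory GRing.Theory Num.Theory.
Local Open Scope ring_scope.

Section RationalApprox.
Variable R : realType.

Lemma is_rat_real_nat n : is_rat_real (n%:R : R).
Proof. by exists n%:R; rewrite ratr_nat. Qed.

Lemma is_rat_realD (x y : R) : is_rat_real x -> is_rat_real y -> is_rat_real (x + y).
Proof. by move=> [a ->] [b ->]; exists (a + b); rewrite rmorphD. Qed.

Lemma is_rat_realB (x y : R) : is_rat_real x -> is_rat_real y -> is_rat_real (x - y).
Proof. by move=> [a ->] [b ->]; exists (a - b); rewrite rmorphB. Qed.

Lemma is_rat_realM (x y : R) : is_rat_real x -> is_rat_real y -> is_rat_real (x * y).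
Proof. by move=> [a ->] [b ->]; exists (a * b); rewrite rmorphM. Qed.

Lemma is_rat_real_sum (I : Type) (r : seq I) (P : pred I) (F : I -> R) :
  (forall i, P i -> is_rat_real (F i)) -> is_rat_real (\sum_(i <- r | P i) F i).
Proof.
by move=> F_rat; apply: big_ind => //; [exact: (is_rat_real_nat 0) | exact: is_rat_realD].
Qed.

Lemma floor_scaled_itv (N x : R) : 0 < N ->
  let y := (Num.floor (N * x))%:~R / N in y <= x < y + N^-1.
Proof.
move=> N_gt0 /=; have /andP[fl_le] := floor_itv (N * x); rewrite intrD => fl_gt.
rewrite ler_pdivrMr // (mulrC x) fl_le /= -(ltr_pM2l N_gt0) mulrDr mulrCA.
by rewrite mulfV ?mulr1 ?divff ?gt_eqF.
Qed.

(* Round every weight down to a multiple of 1/N and put the lost mass [delta]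
   back on the first coordinate; the l1 error is then at most 2 delta. *)
Lemma rat_prob_approx p (lam : 'I_p -> R) eps : (forall j, 0 <= lam j) ->
  \sum_(j < p) lam j = 1 -> 0 < eps ->
  exists lam' : 'I_p -> R, [/\ forall j, 0 <= lam' j, \sum_(j < p) lam' j = 1,
    forall j, is_rat_real (lam' j) & \sum_(j < p) `|lam j - lam' j| < eps].
Proof.
case: p lam => [|p] lam lam_ge0 lam_sum eps_gt0.
  by move: lam_sum; rewrite big_ord0 => /eqP; rewrite eq_sym oner_eq0.
pose n := (Num.truncn (2 * p.+1%:R / eps)).+1.
pose N : R := n%:R.
have N_gt0 : 0 < N by rewrite ltr0n.
have N_big : 2 * (p.+1%:R / N) < eps.
  have := truncnS_gt (2 * p.+1%:R / eps).
  by rewrite mulrA ltr_pdivrMr // ltr_pdivrMr // [eps * _]mulrC.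
pose f j := (Num.floor (N * lam j))%:~R / N.
have f_itv j : f j <= lam j < f j + N^-1 := floor_scaled_itv (lam j) N_gt0.
have f_rat j : is_rat_real (f j).
  exists ((Num.floor (N * lam j))%:~R / n%:R).
  by rewrite fmorph_div /= ratr_int ratr_nat.
have f_ge0 j : 0 <= f j.
  by rewrite divr_ge0 ?(ltW N_gt0) // ler0z floor_ge0 mulr_ge0 ?(ltW N_gt0).
pose delta := \sum_j (lam j - f j).
have delta_ge0 : 0 <= delta.
  by apply: sumr_ge0 => j _; rewrite subr_ge0; case/andP: (f_itv j).
have delta_small : delta <= p.+1%:R / N.
  apply: (@le_trans _ _ (\sum_(j < p.+1) N^-1)).
    by apply: ler_sum => j _; case/andP: (f_itv j) => _; rewrite -ltrBlDl => /ltW.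
  by rewrite sumr_const card_ord mulr_natl.
have delta_E : delta = 1 - \sum_j f j by rewrite /delta sumrB lam_sum.
pose lam' j := f j + (j == ord0)%:R * delta.
have sum_ind : \sum_(j < p.+1) (j == ord0)%:R * delta = delta.
  by rewrite (bigD1 ord0) //= big1 ?mul1r ?addr0 // => j /negbTE->; rewrite mul0r.
exists lam'; split.
- by move=> j; rewrite addr_ge0 ?f_ge0 // mulr_ge0.
- by rewrite big_split /= sum_ind delta_E addrC subrK.
- move=> j; apply: is_rat_realD => //; apply: is_rat_realM; first exact: is_rat_real_nat.
  rewrite delta_E; apply: is_rat_realB; first exact: (is_rat_real_nat 1).
  exact: is_rat_real_sum.
have err_j j : `|lam j - lam' j| <= (lam j - f j) + (j == ord0)%:R * delta.
  rewrite /lam' opprD addrA (le_trans (ler_normB _ _)) // !ger0_norm ?mulr_ge0 //.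
  by rewrite subr_ge0; case/andP: (f_itv j).
apply: le_lt_trans N_big; apply: le_trans (ler_sum _ (fun j _ => err_j j)) _.
by rewrite big_split /= sum_ind -/delta mulr_natl mulr2n lerD.
Qed.

Lemma ler_norm_sum_mulB p (lam lam' v : 'I_p -> R) : (forall j, `|v j| <= 1) ->
  `|\sum_j lam j * v j - \sum_j lam' j * v j| <= \sum_j `|lam j - lam' j|.
Proof.
move=> v_le1; rewrite -sumrB; apply: le_trans (ler_norm_sum _ _ _) _.
by apply: ler_sum => j _; rewrite -mulrBl normrM ler_piMr.
Qed.

End RationalApprox.

Section CarWeights.
Variables (R : realType) (E : finType).
Local Notation T := {set E}.

Definition mech_of_weights (q : T -> R) : mechanism R E :=
  fun A x => if x \in A then q A else 0.

Definition weights_of_mech (pi : mechanism R E) (A : T) : R :=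
  if [pick x in A] is Some x then pi A x else 0.

Definition car_weights (q : T -> R) :=
  [/\ forall A, 0 <= q A, q set0 = 0 & forall x : E, \sum_(A : T | x \in A) q A = 1].

Definition balanced (d : T -> R) := forall x : E, \sum_(A : T | x \in A) d A = 0.

(* Extremality: a balanced d supported in supp q makes q + t d and q - t d CAR
   weights for small t. *)
Definition extreme_weights (q : T -> R) := car_weights q /\
  forall d, (forall A, q A = 0 -> d A = 0) -> balanced d -> forall A, d A = 0.

Definition supp (q : T -> R) := [set A | q A != 0].

Lemma mech_of_weightsK (pi : mechanism R E) :
  is_CAR pi -> mech_of_weights (weights_of_mech pi) =2 pi.
Proof.
case=> _ pi_out _ pi_const A x; rewrite /mech_of_weights /weights_of_mech.
have [xA|xNA] := boolP (x \in A); last by rewrite pi_out.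
by case: pickP => [y yA|/(_ x)]; [exact: pi_const | rewrite xA].
Qed.

Lemma car_weights_of_mech (pi : mechanism R E) :
  is_CAR pi -> car_weights (weights_of_mech pi).
Proof.
move=> piC; have [pi_ge0 _ pi_sum _] := piC; split.
- by move=> A; rewrite /weights_of_mech; case: pickP.
- by rewrite /weights_of_mech; case: pickP => [y|//]; rewrite in_set0.
- move=> x; rewrite -(pi_sum x); apply: eq_bigr => A xA.
  by rewrite -(mech_of_weightsK piC) /mech_of_weights xA.
Qed.

Lemma is_CAR_mech_of_weights q : car_weights q -> is_CAR (mech_of_weights q).
Proof.
case=> q_ge0 _ q_sum; rewrite /mech_of_weights; split.
- by move=> A x; case: ifP.
- by move=> A x /negbTE ->.
- by move=> x; rewrite -(q_sum x); apply: eq_bigr => A ->.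
- by move=> A x y -> ->.
Qed.

Lemma is_CAR_le1 (pi : mechanism R E) A x : is_CAR pi -> pi A x <= 1.
Proof.
case=> pi_ge0 pi_out pi_sum _; have [xA|/pi_out ->] := boolP (x \in A); last exact: ler01.
by rewrite -(pi_sum x) (bigD1 A) //= lerDl sumr_ge0.
Qed.

Lemma extreme_CAR_mech_of_weights q :
  extreme_weights q -> extreme_CAR (mech_of_weights q).
Proof.
case=> qC q_extr; split; first exact: is_CAR_mech_of_weights.
move=> pi1 pi2 t pi1C pi2C /andP[t_gt0 t_lt1] pi_mix.
suff eq12 B : weights_of_mech pi1 B = weights_of_mech pi2 B.
  move=> A x; rewrite -(mech_of_weightsK pi1C) -(mech_of_weightsK pi2C).
  by rewrite /mech_of_weights eq12.
apply/eqP; rewrite -subr_eq0; apply/eqP.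
apply: (q_extr (fun B => weights_of_mech pi1 B - weights_of_mech pi2 B)).
- move=> D qD0; rewrite /weights_of_mech; case: pickP => [y yD|_]; last by rewrite subrr.
  have [pi1_ge0 _ _ _] := pi1C; have [pi2_ge0 _ _ _] := pi2C.
  move: (pi_mix D y); rewrite /mech_of_weights yD qD0 => /esym/eqP.
  rewrite paddr_eq0 ?mulr_ge0 ?subr_ge0 ?(ltW t_gt0) ?(ltW t_lt1) //.
  rewrite !mulf_eq0 (gt_eqF t_gt0) subr_eq0 (gt_eqF t_lt1) /=.
  by case/andP=> /eqP-> /eqP->; rewrite subrr.
- move=> y; rewrite sumrB.
  have [_ _ ->] := car_weights_of_mech pi1C.
  by have [_ _ ->] := car_weights_of_mech pi2C; rewrite subrr.
Qed.

Definition incidence (F : fieldType) (S : {set T}) : 'M[F]_(#|{: T}|, #|{: E}|) :=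
  \matrix_(i, j) (((enum_val j : E) \in (enum_val i : T)) && ((enum_val i : T) \in S))%:R.

Lemma map_incidence S : map_mx (@ratr R) (incidence rat S) = incidence R S.
Proof. by apply/matrixP => i j; rewrite !mxE rmorph_nat. Qed.

Lemma mul_incidence (F : fieldType) S (u : 'rV[F]_#|{: T}|) x :
  (u *m incidence F S) 0 (enum_rank x) =
  \sum_(A : T | x \in A) (if A \in S then u 0 (enum_rank A) else 0).
Proof.
rewrite mxE (reindex enum_rank) /=; last exact: onW_bij (@enum_rank_bij _).
rewrite [RHS]big_mkcond; apply: eq_bigr => A _; rewrite mxE !enum_rankK.
by case: (x \in A); case: (A \in S); rewrite ?mulr1 ?mulr0.
Qed.

(* On its support an extreme q is the unique solution of a linear system with
   0/1 coefficients; the system is solvable over rat because it is over R. *)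
Lemma extreme_weights_rat q : extreme_weights q -> forall A, is_rat_real (q A).
Proof.
case=> [[_ _ q_sum] q_extr].
pose v : 'rV[R]_#|{: T}| := \row_i q (enum_val i).
have v_sol : v *m incidence R (supp q) = const_mx 1.
  apply/matrixP => i j; rewrite ord1 -(enum_valK j) mul_incidence mxE.
  rewrite -(q_sum (enum_val j)); apply: eq_bigr => A _.
  by rewrite mxE enum_rankK inE; case: eqP => // ->.
have : ((const_mx 1 : 'rV[rat]_#|{: E}|) <= incidence rat (supp q))%MS.
  rewrite -(map_submx (@ratr R)) map_const_mx rmorph1 map_incidence -v_sol.
  exact: submxMl.
case/submxP => y y_sol.
pose w A : rat := if A \in supp q then y 0 (enum_rank A) else 0.
suff q_w A : q A = ratr (w A) by move=> A; exists (w A).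
apply/eqP; rewrite -subr_eq0; apply/eqP; move: A.
apply: q_extr => [A qA0|x]; first by rewrite /w inE qA0 eqxx rmorph0 subrr.
apply/eqP; rewrite sumrB q_sum subr_eq0 eq_sym.
have y_solR : const_mx 1 = map_mx (@ratr R) y *m incidence R (supp q).
  by rewrite -map_incidence -map_mxM -y_sol map_const_mx rmorph1.
have := congr1 (fun M : 'rV[R]_#|{: E}| => M 0 (enum_rank x)) y_solR.
rewrite /= mul_incidence mxE => ->.
by apply/eqP/eq_bigr => A _; rewrite /w mxE; case: ifP; rewrite ?rmorph0.
Qed.

Lemma extreme_weights_multicover q : extreme_weights q ->
  exists (m : T -> nat) (k : nat),
    uniform_multicover m k /\ mech_of_weights q =2 multicover_mech R m k.
Proof.
move=> q_extr; have [[q_ge0 q0 q_sum] _] := q_extr.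
have [r q_r] := fin_all_exists (extreme_weights_rat q_extr).
have r_ge0 A : 0 <= r A by have := q_ge0 A; rewrite q_r ler0q.
have r0 : r set0 = 0 by apply/eqP; rewrite -(fmorph_eq0 (@ratr R)) /= -q_r q0.
have r_sum x : \sum_(A : T | x \in A) r A = 1.
  apply/eqP; rewrite -(fmorph_eq1 (@ratr R)) /= rmorph_sum -(q_sum x).
  by apply/eqP/eq_bigr => A _; rewrite q_r.
pose k := (\prod_(A : T) `|denq (r A)|)%N.
have k_gt0 : (0 < k)%N by rewrite prodn_gt0 // => A; rewrite absz_gt0 denq_neq0.
have rk_nat A : r A * k%:R \is a Num.nat.
  rewrite natrEint mulr_ge0 ?r_ge0 ?ler0n // andbT /k (bigD1 A) //= natrM mulrA.
  rewrite natr_absz gtr0_norm ?denq_gt0 // -{1}(divq_num_den (r A)).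
  by rewrite mulfVK ?intr_eq0 ?denq_neq0 // rpredM ?intr_int ?natr_int.
pose m A := Num.truncn (r A * k%:R).
have m_r A : (m A)%:R = r A * k%:R by exact: truncnK.
exists m, k; split.
  split => // [|x]; apply/eqP; rewrite -(eqr_nat rat).
    by rewrite m_r r0 mul0r.
  by rewrite natr_sum (eq_bigr _ (fun A _ => m_r A)) -mulr_suml r_sum mul1r.
move=> A x; rewrite /mech_of_weights /multicover_mech; case: ifP => // _.
have -> : (m A)%:R = ratr (m A)%:R :> R by rewrite ratr_nat.
by rewrite m_r rmorphM rmorph_nat mulfK ?q_r // pnatr_eq0 -lt0n.
Qed.

Lemma balanced_has_neg d A0 : balanced d -> d set0 = 0 -> d A0 != 0 ->
  exists A, d A < 0.
Proof.
move=> d_bal d0 dA0; have [/existsP[A dA]|] := boolP [exists A, d A < 0].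
  by exists A.
rewrite negb_exists => /forallP d_nlt0.
have /set0Pn[x xA0] : A0 != set0 by apply: contraNneq dA0 => ->; rewrite d0.
have d_ge0 A : 0 <= d A by rewrite leNgt d_nlt0.
by move: dA0; rewrite (psumr_eq0P (fun A _ => d_ge0 A) (d_bal x)) ?eqxx.
Qed.

(* The step t is the largest one keeping q + t d nonnegative; a minimising set
   leaves the support. *)
Lemma car_weights_shrink q d : car_weights q -> (forall A, q A = 0 -> d A = 0) ->
  balanced d -> (exists A, d A < 0) ->
  exists2 t, 0 < t & let q' A := q A + t * d A in
    car_weights q' /\ supp q' \proper supp q.
Proof.
case=> q_ge0 q0 q_sum d_supp d_bal [A0 dA0].
pose ratio A := q A / - d A.
have [A1 dA1 ratio_min] := @arg_minP _ _ _ A0 (fun A => d A < 0) ratio dA0.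
have qA1 : 0 < q A1.
  by rewrite lt_def q_ge0 andbT; apply: contraTneq dA1 => /d_supp ->; rewrite ltxx.
have t_gt0 : 0 < ratio A1 by rewrite divr_gt0 ?oppr_gt0.
exists (ratio A1) => //; split; first split.
- move=> A; have [dA|dA] := ltP (d A) 0; last by rewrite addr_ge0 ?q_ge0 // mulr_ge0 // ltW.
  have := ratio_min A dA; rewrite /ratio ler_pdivlMr ?oppr_gt0 //.
  by rewrite mulrN -subr_ge0 opprK addrC.
- by rewrite q0 (d_supp _ q0) mulr0 addr0.
- by move=> x; rewrite big_split /= -mulr_sumr q_sum d_bal mulr0 addr0.
rewrite properE; apply/andP; split.
  apply/subsetP => A; rewrite !inE; apply: contraNneq => qA0.
  by rewrite qA0 (d_supp _ qA0) mulr0 addr0.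
apply/subsetPn; exists A1; first by rewrite inE gt_eqF.
by rewrite inE negbK /ratio invrN mulrN mulNr divfK ?subrr ?(lt_eqF dA1).
Qed.

Lemma car_weights_split q : car_weights q -> ~ extreme_weights q ->
  exists c q1 q2, [/\ 0 <= c <= 1,
    car_weights q1 /\ supp q1 \proper supp q,
    car_weights q2 /\ supp q2 \proper supp q
  & forall A, q A = c * q1 A + (1 - c) * q2 A].
Proof.
move=> qC q_nextr.
have [d [d_supp d_bal [A0 dA0]]] : exists d, [/\ forall A, q A = 0 -> d A = 0,
    balanced d & exists A, d A != 0].
  apply: NNPP => no_d; apply: q_nextr; split => // d d_supp d_bal A.
  by apply: NNPP => dA; apply: no_d; exists d; split => //; exists A; apply/eqP.
have q0 : q set0 = 0 by case: qC.
have Nd_supp A : q A = 0 -> - d A = 0 by move/d_supp->; rewrite oppr0.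
have Nd_bal : balanced (fun A => - d A) by move=> x; rewrite sumrN d_bal oppr0.
have [t1 t1_gt0 q1P] := car_weights_shrink qC d_supp d_bal
  (balanced_has_neg d_bal (d_supp _ q0) dA0).
have NdA0 : - d A0 != 0 by rewrite oppr_eq0.
have [t2 t2_gt0 q2P] := car_weights_shrink qC Nd_supp Nd_bal
  (balanced_has_neg Nd_bal (Nd_supp _ q0) NdA0).
have t12_gt0 : 0 < t1 + t2 by rewrite addr_gt0.
exists (t2 / (t1 + t2)), (fun A => q A + t1 * d A), (fun A => q A + t2 * - d A).
split; [|exact: q1P|exact: q2P|].
  apply/andP; split; first by rewrite divr_ge0 // ltW.
  by rewrite ler_pdivrMr // mul1r lerDr ltW.
by move=> A /=; field; rewrite gt_eqF.
Qed.

Definition extreme_mixture (q : T -> R) :=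
  exists p (lam : 'I_p -> R) (qs : 'I_p -> T -> R),
    [/\ forall j, 0 <= lam j, \sum_(j < p) lam j = 1,
        forall j, extreme_weights (qs j)
      & forall A, q A = \sum_(j < p) lam j * qs j A].

Lemma extreme_mixture_conv q c q1 q2 : 0 <= c <= 1 ->
  extreme_mixture q1 -> extreme_mixture q2 ->
  (forall A, q A = c * q1 A + (1 - c) * q2 A) -> extreme_mixture q.
Proof.
case/andP=> c_ge0 c_le1 [p1 [lam1 [qs1 [lam1_ge0 lam1_sum qs1_extr q1E]]]].
case=> [p2 [lam2 [qs2 [lam2_ge0 lam2_sum qs2_extr q2E]]]] qE.
pose lam j := match split j with inl i => c * lam1 i | inr i => (1 - c) * lam2 i end.
pose qs j := match split j with inl i => qs1 i | inr i => qs2 i end.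
have splitl i : split (lshift p2 i) = inl i by exact: (unsplitK (inl _ i)).
have splitr i : split (rshift p1 i) = inr i by exact: (unsplitK (inr _ i)).
exists (p1 + p2)%N, lam, qs; split.
- by move=> j; rewrite /lam; case: split => i; rewrite mulr_ge0 ?subr_ge0.
- rewrite big_split_ord /lam; under eq_bigr do rewrite splitl.
  under [X in _ + X = _]eq_bigr do rewrite splitr.
  by rewrite -!mulr_sumr lam1_sum lam2_sum !mulr1 addrC subrK.
- by move=> j; rewrite /qs; case: split.
move=> A; rewrite qE q1E q2E big_split_ord !mulr_sumr /lam /qs.
by congr (_ + _); apply: eq_bigr => i _; rewrite ?splitl ?splitr mulrA.
Qed.

Lemma car_weights_extreme_mixture q : car_weights q -> extreme_mixture q.
Proof.
have [n] := ubnP #|supp q|; elim: n q => // n IH q; rewrite ltnS => supp_le qC.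
have [q_extr|q_nextr] := classic (extreme_weights q).
  exists 1%N, (fun=> 1), (fun=> q).
  by split => // [|A]; rewrite big_ord1 ?mul1r.
have [c [q1 [q2 [c01 [q1C q1_supp] [q2C q2_supp] qE]]]] := car_weights_split qC q_nextr.
apply: (extreme_mixture_conv c01 _ _ qE); apply: IH => //.
  exact: leq_trans (proper_card q1_supp) supp_le.
exact: leq_trans (proper_card q2_supp) supp_le.
Qed.

Lemma is_CAR_conv p (lam : 'I_p -> R) (pis : 'I_p -> mechanism R E) :
  (forall j, 0 <= lam j) -> \sum_j lam j = 1 -> (forall j, is_CAR (pis j)) ->
  is_CAR (fun A x => \sum_j lam j * pis j A x).
Proof.
move=> lam_ge0 lam_sum pisC; split.
- by move=> A x; apply: sumr_ge0 => j _; have [pi_ge0 _ _ _] := pisC j; rewrite mulr_ge0.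
- by move=> A x xA; rewrite big1 // => j _; have [_ -> // _ _] := pisC j; rewrite mulr0.
- move=> x; rewrite exchange_big -lam_sum /=; apply: eq_bigr => j _.
  by rewrite -mulr_sumr; have [_ _ -> _] := pisC j; rewrite mulr1.
- move=> A x y xA yA; apply: eq_bigr => j _.
  by have [_ _ _ pi_const] := pisC j; rewrite (pi_const A x y).
Qed.

Lemma mech_dist_lt (pi pi' : mechanism R E) eps : 0 < eps ->
  (forall A x, `|pi A x - pi' A x| < eps) -> mech_dist pi pi' < eps.
Proof.
move=> eps_gt0 pi_near; rewrite /mech_dist.
elim/big_ind: _ => // [a b|A _]; first by rewrite gt_max => -> ->.
by elim/big_ind: _ => // a b; rewrite gt_max => -> ->.
Qed.

Lemma CAR_extreme_mixture (pi : mechanism R E) : is_CAR pi ->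
  exists p (lam : 'I_p -> R) (qs : 'I_p -> T -> R),
    [/\ forall j, 0 <= lam j, \sum_(j < p) lam j = 1,
        forall j, extreme_weights (qs j)
      & forall A x, pi A x = \sum_(j < p) lam j * mech_of_weights (qs j) A x].
Proof.
move=> piC; have [p [lam [qs [lam_ge0 lam_sum qs_extr qE]]]] :=
  car_weights_extreme_mixture (car_weights_of_mech piC).
exists p, lam, qs; split => // A x; rewrite -(mech_of_weightsK piC) /mech_of_weights qE.
by case: ifP => // _; rewrite big1 // => j _; rewrite mulr0.
Qed.

Lemma CAR_extreme_rational_mixture (pi : mechanism R E) : is_CAR pi ->
  exists p (lam : 'I_p -> R) (pis : 'I_p -> mechanism R E),
    [/\ forall j, 0 <= lam j, \sum_(j < p) lam j = 1,
        forall j, extreme_CAR (pis j) /\ rational_mech (pis j)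
      & forall A x, pi A x = \sum_(j < p) lam j * pis j A x].
Proof.
case/CAR_extreme_mixture => p [lam [qs [lam_ge0 lam_sum qs_extr piE]]].
exists p, lam, (fun j => mech_of_weights (qs j)); split => // j.
split; first exact: extreme_CAR_mech_of_weights.
move=> A x; rewrite /mech_of_weights; case: ifP => _; last by exists 0; rewrite rmorph0.
exact: extreme_weights_rat.
Qed.

Lemma CAR_multicover_mixture (pi : mechanism R E) : is_CAR pi ->
  exists p (lam : 'I_p -> R) (ms : 'I_p -> T -> nat) (ks : 'I_p -> nat),
    [/\ forall j, 0 <= lam j, \sum_(j < p) lam j = 1,
        forall j, uniform_multicover (ms j) (ks j)
      & forall A x, pi A x = \sum_(j < p) lam j * multicover_mech R (ms j) (ks j) A x].
Proof.
case/CAR_extreme_mixture => p [lam [qs [lam_ge0 lam_sum qs_extr piE]]].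
have /fin_all_exists[mk mkP] : forall j, exists mk : (T -> nat) * nat,
    uniform_multicover mk.1 mk.2 /\ mech_of_weights (qs j) =2 multicover_mech R mk.1 mk.2.
  by move=> j; have [m [k mkP]] := extreme_weights_multicover (qs_extr j); exists (m, k).
exists p, lam, (fun j => (mk j).1), (fun j => (mk j).2).
split => // [j|A x]; first by case: (mkP j).
by rewrite piE; apply: eq_bigr => j _; case: (mkP j) => _ ->.
Qed.

Lemma CAR_rational_dense (pi : mechanism R E) eps : is_CAR pi -> 0 < eps ->
  exists pi' : mechanism R E, [/\ is_CAR pi', rational_mech pi' & mech_dist pi pi' < eps].
Proof.
case/CAR_extreme_mixture => p [lam [qs [lam_ge0 lam_sum qs_extr piE]]] eps_gt0.
have [lam' [lam'_ge0 lam'_sum lam'_rat lam'_near]] :=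
  rat_prob_approx lam_ge0 lam_sum eps_gt0.
have qsC j : is_CAR (mech_of_weights (qs j)).
  by apply: is_CAR_mech_of_weights; case: (qs_extr j).
exists (fun A x => \sum_j lam' j * mech_of_weights (qs j) A x); split.
- exact: is_CAR_conv.
- move=> A x; apply: is_rat_real_sum => j _; apply: is_rat_realM => //.
  rewrite /mech_of_weights; case: ifP => _; first exact: extreme_weights_rat.
  by exists 0; rewrite rmorph0.
apply: mech_dist_lt => // A x; rewrite piE; apply: le_lt_trans lam'_near.
apply: ler_norm_sum_mulB => j; rewrite ger0_norm ?is_CAR_le1 //.
by case: (qsC j) => qs_ge0 _ _ _.
Qed.

End CarWeights.

Theorem theorem2 (R : realType) (E : finType) (hE : (0 < #|E|)%N) :
  (forall (pi : mechanism R E) (eps : R), is_CAR pi -> 0 < eps ->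
     exists pi' : mechanism R E,
       [/\ is_CAR pi', rational_mech pi' & mech_dist pi pi' < eps]) /\
  (forall pi : mechanism R E, is_CAR pi ->
     exists (p : nat) (lam : 'I_p -> R) (pis : 'I_p -> mechanism R E),
       [/\ (forall j, 0 <= lam j), \sum_(j < p) lam j = 1,
           (forall j, extreme_CAR (pis j) /\ rational_mech (pis j))
         & forall (A : {set E}) (x : E), pi A x = \sum_(j < p) lam j * pis j A x]) /\
  (forall pi : mechanism R E, is_CAR pi ->
     exists (p : nat) (lam : 'I_p -> R) (ms : 'I_p -> {set E} -> nat) (ks : 'I_p -> nat),
       [/\ (forall j, 0 <= lam j), \sum_(j < p) lam j = 1,
           (forall j, uniform_multicover (ms j) (ks j))
         & forall (A : {set E}) (x : E), pi A x = \sum_(j < p) lam j * multicover_mech R (ms j) (ks j) A x]).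
Proof.
split; [|split] => pi.
- by move=> eps; exact: CAR_rational_dense.
- exact: CAR_extreme_rational_mixture.
- exact: CAR_multicover_mixture.
Qed.
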